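(* Let $c>0$, $m>0$, $q\in\mathbb{R}\setminus\{0\}$, and let $E=(E_1,\dots,E_n)$ with each $E_j\in C^1(\mathbb{R})$ and $\sup_{t}\sum_j|E_j^{(k)}(t)|<E_{0,k}<\infty$ for $k\in\{0,1\}$; put $b(t)=\int_0^tqE(s)\,ds$ and, for $\xi\in\mathbb{R}^n$, $Q(t,\xi)=(c^2(\xi+b(t))^2+(mc^2)^2)^{1/2}$, $Q'=\partial_tQ$. Consider the integral equations $$B(t,\xi)=\int_0^t\Big(Q(s,\xi)-Q(s,\xi)^{-1}Q'(s,\xi)\sin B(s,\xi)\cos B(s,\xi)\Big)ds,$$ $$D(t,\xi)=\int_0^t\Big(Q(s,\xi)+Q(s,\xi)^{-1}Q'(s,\xi)\sin D(s,\xi)\cos D(s,\xi)\Big)ds.$$ Then solutions $B(\cdot,\xi)$, $D(\cdot,\xi)$ of these equations are of class $C^2(\mathbb{R})$ in $t$ (as are $A(t,\xi)=\exp(-\int_0^tQ^{-1}Q'\sin^2B\,ds)$ and $C(t,\xi)=Q(0,\xi)^{-1}\exp(-\int_0^tQ^{-1}Q'\cos^2D\,ds)$), and the solutions $B$ and $D$ of these integral equations are unique. *)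

From Stdlib Require Import Reals.
From Coquelicot Require Import Coquelicot.
Open Scope R_scope.

Fixpoint sumR (n : nat) (f : nat -> R) : R :=
  match n with
  | O => 0
  | S k => sumR k f + f k
  end.

Definition isC1 (f : R -> R) : Prop :=
  forall t, ex_derive f t /\ continuous (Derive f) t.

Definition isC2 (f : R -> R) : Prop :=
  forall t, ex_derive f t /\ ex_derive (Derive f) t /\
            continuous (Derive (Derive f)) t.

Definition bfun (q : R) (E : nat -> R -> R) (j : nat) (t : R) : R :=
  RInt (fun s => q * E j s) 0 t.

Definition Qfun (c m q : R) (n : nat) (E : nat -> R -> R)
    (xi : nat -> R) (t : R) : R :=
  sqrt (c ^ 2 * sumR n (fun j => (xi j + bfun q E j t) ^ 2) + (m * c ^ 2) ^ 2).

Definition Qder (c m q : R) (n : nat) (E : nat -> R -> R)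
    (xi : nat -> R) (t : R) : R :=
  Derive (Qfun c m q n E xi) t.

Definition solB (c m q : R) (n : nat) (E : nat -> R -> R)
    (xi : nat -> R) (B : R -> R) : Prop :=
  forall t, is_RInt (fun s => Qfun c m q n E xi s
      - / Qfun c m q n E xi s * Qder c m q n E xi s * sin (B s) * cos (B s))
    0 t (B t).

Definition solD (c m q : R) (n : nat) (E : nat -> R -> R)
    (xi : nat -> R) (D : R -> R) : Prop :=
  forall t, is_RInt (fun s => Qfun c m q n E xi s
      + / Qfun c m q n E xi s * Qder c m q n E xi s * sin (D s) * cos (D s))
    0 t (D t).

Definition Afun (c m q : R) (n : nat) (E : nat -> R -> R)
    (xi : nat -> R) (B : R -> R) (t : R) : R :=
  exp (- RInt (fun s => / Qfun c m q n E xi s * Qder c m q n E xi s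
                         * (sin (B s)) ^ 2) 0 t).

Definition Cfun (c m q : R) (n : nat) (E : nat -> R -> R)
    (xi : nat -> R) (D : R -> R) (t : R) : R :=
  / Qfun c m q n E xi 0 *
  exp (- RInt (fun s => / Qfun c m q n E xi s * Qder c m q n E xi s
                         * (cos (D s)) ^ 2) 0 t).

From Stdlib Require Import Reals Lra Lia FunctionalExtensionality.
From Coquelicot Require Import Coquelicot.
Open Scope R_scope.

(* With g = Q^{-1} Q', both integral equations say B(0) = 0 and
   B' = Q + k g sin B cos B, with k = -1 for B and k = 1 for D.  The radicand
   of Q is at least (m c^2)^2 > 0 and b is C^2 because E is C^1, so Q is C^2
   and g is C^1.  A solution is continuous, hence C^1 by the fundamental
   theorem of calculus, and differentiating the right-hand side once more
   makes it C^2; A and C are exponentials of C^2 primitives.  For uniqueness,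
   x |-> sin x cos x is 1-Lipschitz, so the difference w of two solutions
   satisfies |w'| <= |g| |w| and w(0) = 0, and Gronwall's argument gives
   w = 0. *)

Definition is_C1 (f f' : R -> R) : Prop :=
  forall t, is_derive f t (f' t) /\ continuous f' t.

Lemma is_C1_continuous f f' t : is_C1 f f' -> continuous f t.
Proof.
  intros Hf. apply (ex_derive_continuous (V:=R_NormedModule)).
  exists (f' t). apply Hf.
Qed.

Lemma is_C1_ext f f' g g' : is_C1 f f' ->
  (forall t, f t = g t) -> (forall t, f' t = g' t) -> is_C1 g g'.
Proof.
  intros Hf Hfg Hfg'.
  replace g with f by (apply functional_extensionality; auto).
  replace g' with f' by (apply functional_extensionality; auto).
  exact Hf.
Qed.

Lemma is_C1_const a : is_C1 (fun _ => a) (fun _ => 0).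
Proof.
  intros t; split.
  - apply (is_derive_const (K:=R_AbsRing) (V:=R_NormedModule)).
  - apply continuous_const.
Qed.

Lemma is_C1_plus f f' g g' : is_C1 f f' -> is_C1 g g' ->
  is_C1 (fun t => f t + g t) (fun t => f' t + g' t).
Proof.
  intros Hf Hg t; destruct (Hf t), (Hg t); split.
  - apply (is_derive_plus (K:=R_AbsRing) (V:=R_NormedModule)); auto.
  - apply (continuous_plus (V:=R_NormedModule)); auto.
Qed.

Lemma is_C1_mult f f' g g' : is_C1 f f' -> is_C1 g g' ->
  is_C1 (fun t => f t * g t) (fun t => f' t * g t + f t * g' t).
Proof.
  intros Hf Hg t; destruct (Hf t), (Hg t); split.
  - apply Derive.is_derive_mult; auto.
  - apply (continuous_plus (V:=R_NormedModule)); apply (continuous_mult (K:=R_AbsRing)); auto;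
      eapply is_C1_continuous; eauto.
Qed.

Lemma is_C1_scal a f f' : is_C1 f f' -> is_C1 (fun t => a * f t) (fun t => a * f' t).
Proof.
  intros Hf. eapply is_C1_ext; [apply is_C1_mult; [apply (is_C1_const a) | exact Hf] | |].
  all: intros; simpl; ring.
Qed.

Lemma is_C1_sqr f f' : is_C1 f f' -> is_C1 (fun t => f t ^ 2) (fun t => 2 * f t * f' t).
Proof.
  intros Hf. eapply is_C1_ext; [apply is_C1_mult; exact Hf | |].
  all: intros; simpl; ring.
Qed.

Lemma is_C1_comp h h' f f' :
  (forall x, is_derive h x (h' x)) -> (forall x, continuous h' x) ->
  is_C1 f f' -> is_C1 (fun t => h (f t)) (fun t => h' (f t) * f' t).
Proof.
  intros Hh Hh' Hf t; destruct (Hf t); split.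
  - rewrite Rmult_comm. apply (is_derive_comp h f); auto.
  - apply (continuous_mult (K:=R_AbsRing)); auto.
    apply continuous_comp; auto. eapply is_C1_continuous; eauto.
Qed.

Lemma is_C1_sin f f' : is_C1 f f' -> is_C1 (fun t => sin (f t)) (fun t => cos (f t) * f' t).
Proof. apply (is_C1_comp sin cos); [apply is_derive_sin | apply continuous_cos]. Qed.

Lemma is_C1_cos f f' : is_C1 f f' -> is_C1 (fun t => cos (f t)) (fun t => - sin (f t) * f' t).
Proof.
  apply (is_C1_comp cos (fun x => - sin x)); [apply is_derive_cos |].
  intros x. apply (continuous_opp (V:=R_NormedModule)), continuous_sin.
Qed.

Lemma is_C1_exp f f' : is_C1 f f' -> is_C1 (fun t => exp (f t)) (fun t => exp (f t) * f' t).
Proof. apply (is_C1_comp exp exp); [apply is_derive_exp | apply continuous_exp]. Qed.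

Lemma is_C1_inv f f' : (forall t, f t <> 0) -> is_C1 f f' ->
  is_C1 (fun t => / f t) (fun t => - f' t / f t ^ 2).
Proof.
  intros Hf0 Hf t; destruct (Hf t); split.
  - apply is_derive_inv; auto.
  - apply (continuous_mult (K:=R_AbsRing)).
    + apply (continuous_opp (V:=R_NormedModule)); auto.
    + apply continuous_Rinv_comp.
      * apply (continuous_mult (K:=R_AbsRing)); [eapply is_C1_continuous; eauto |].
        apply (continuous_mult (K:=R_AbsRing)); [eapply is_C1_continuous; eauto | apply continuous_const].
      * simpl. rewrite Rmult_1_r. apply Rmult_integral_contrapositive; auto.
Qed.

Lemma is_C1_sqrt f f' : (forall t, 0 < f t) -> is_C1 f f' ->
  is_C1 (fun t => sqrt (f t)) (fun t => f' t / (2 * sqrt (f t))).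
Proof.
  intros Hf0 Hf t; destruct (Hf t); split.
  - apply is_derive_sqrt; auto.
  - apply (continuous_mult (K:=R_AbsRing)); auto.
    apply continuous_Rinv_comp.
    + apply (continuous_mult (K:=R_AbsRing)); [apply continuous_const |].
      apply continuous_sqrt_comp. eapply is_C1_continuous; eauto.
    + apply Rgt_not_eq, Rmult_lt_0_compat; [lra | apply sqrt_lt_R0, Hf0].
Qed.

Lemma is_C1_RInt h : (forall t, continuous h t) -> is_C1 (fun t => RInt h 0 t) h.
Proof.
  intros Hh t; split; auto.
  apply (is_derive_RInt (V:=R_CompleteNormedModule) h _ 0); auto.
  apply filter_forall; intros y.
  apply (RInt_correct (V:=R_CompleteNormedModule)).
  apply (ex_RInt_continuous (V:=R_CompleteNormedModule)); auto.
Qed.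

Lemma isC1_is_C1_Derive f : isC1 f -> is_C1 f (Derive f).
Proof. intros Hf t; destruct (Hf t); split; auto. apply Derive_correct; auto. Qed.

Lemma is_C1_opp f f' : is_C1 f f' -> is_C1 (fun t => - f t) (fun t => - f' t).
Proof.
  intros Hf t; destruct (Hf t); split.
  - apply (is_derive_opp (K:=R_AbsRing) (V:=R_NormedModule)); auto.
  - apply (continuous_opp (V:=R_NormedModule)); auto.
Qed.

Lemma is_C1_Derive f f' : is_C1 f f' -> Derive f = f'.
Proof. intros Hf. apply functional_extensionality; intros t. apply is_derive_unique, Hf. Qed.

Definition ex_C2 (f : R -> R) : Prop := exists f' f'', is_C1 f f' /\ is_C1 f' f''.

Lemma ex_C2_is_C1_Derive f : ex_C2 f ->
  is_C1 f (Derive f) /\ is_C1 (Derive f) (Derive (Derive f)).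
Proof.
  intros (f' & f'' & Hf & Hf').
  rewrite (is_C1_Derive _ _ Hf), (is_C1_Derive _ _ Hf'). auto.
Qed.

Lemma ex_C2_isC2 f : ex_C2 f -> isC2 f.
Proof.
  intros Hf t. destruct (ex_C2_is_C1_Derive f Hf) as [H1 H2].
  split; [| split].
  - exists (Derive f t). apply H1.
  - exists (Derive (Derive f) t). apply H2.
  - apply H2.
Qed.

Lemma ex_C2_const a : ex_C2 (fun _ => a).
Proof. exists (fun _ => 0), (fun _ => 0). split; apply is_C1_const. Qed.

Lemma ex_C2_plus f g : ex_C2 f -> ex_C2 g -> ex_C2 (fun t => f t + g t).
Proof.
  intros (f' & f'' & Hf & Hf') (g' & g'' & Hg & Hg').
  do 2 eexists; split; apply is_C1_plus; eauto.
Qed.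

Lemma ex_C2_mult f g : ex_C2 f -> ex_C2 g -> ex_C2 (fun t => f t * g t).
Proof.
  intros (f' & f'' & Hf & Hf') (g' & g'' & Hg & Hg').
  do 2 eexists; split; [apply is_C1_mult; eauto |].
  apply is_C1_plus; apply is_C1_mult; eauto.
Qed.

Lemma ex_C2_sqr f : ex_C2 f -> ex_C2 (fun t => f t ^ 2).
Proof.
  intros (f' & f'' & Hf & Hf').
  do 2 eexists; split; [apply is_C1_sqr; eauto |].
  apply is_C1_mult; [apply is_C1_scal |]; eauto.
Qed.

Lemma ex_C2_sum n (f : nat -> R -> R) : (forall j, (j < n)%nat -> ex_C2 (f j)) ->
  ex_C2 (fun t => sumR n (fun j => f j t)).
Proof.
  induction n as [| n IHn]; intros Hf; simpl.
  - apply ex_C2_const.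
  - apply (ex_C2_plus (fun t => sumR n (fun j => f j t))); [apply IHn; auto |]; auto.
Qed.

Lemma ex_C2_sqrt f : (forall t, 0 < f t) -> ex_C2 f -> ex_C2 (fun t => sqrt (f t)).
Proof.
  intros Hf0 (f' & f'' & Hf & Hf').
  do 2 eexists; split; [apply is_C1_sqrt; eauto |].
  apply is_C1_mult; [exact Hf' |].
  apply is_C1_inv; [| apply is_C1_scal, is_C1_sqrt; eauto].
  intros t. apply Rgt_not_eq, Rmult_lt_0_compat; [lra | apply sqrt_lt_R0, Hf0].
Qed.

Lemma ex_C2_exp f : ex_C2 f -> ex_C2 (fun t => exp (f t)).
Proof.
  intros (f' & f'' & Hf & Hf').
  do 2 eexists; split; [apply is_C1_exp; eauto |].
  apply is_C1_mult; [apply is_C1_exp |]; eauto.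
Qed.

Lemma ex_C2_opp f : ex_C2 f -> ex_C2 (fun t => - f t).
Proof. intros (f' & f'' & Hf & Hf'). do 2 eexists; split; apply is_C1_opp; eauto. Qed.

Lemma ex_C2_RInt h h' : is_C1 h h' -> ex_C2 (fun t => RInt h 0 t).
Proof.
  intros Hh. exists h, h'; split; auto.
  apply is_C1_RInt. intros t; eapply is_C1_continuous; eauto.
Qed.

Lemma MVT_nonpos (phi phi' : R -> R) t :
  (forall s, is_derive phi s (phi' s)) -> phi 0 = 0 ->
  (forall s, phi' s * t <= 0) -> phi t <= 0.
Proof.
  intros Hphi Hphi0 Hsign.
  destruct (MVT_gen phi 0 t phi') as (s & _ & Hs).
  - intros; apply Hphi.
  - intros x _. apply continuity_pt_filterlim, (ex_derive_continuous (V:=R_NormedModule)).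
    eexists; apply Hphi.
  - specialize (Hsign s). rewrite Hphi0, Rminus_0_r in Hs. lra.
Qed.

Lemma Gronwall_zero (w w' L : R -> R) :
  (forall t, is_derive w t (w' t)) -> (forall t, continuous L t) ->
  (forall t, Rabs (w' t) <= L t * Rabs (w t)) -> w 0 = 0 ->
  forall t, w t = 0.
Proof.
  intros Hw HL Hw' Hw0 t.
  set (G := fun t => RInt L 0 t).
  assert (HG : is_C1 G L) by (apply is_C1_RInt; auto).
  assert (Hweight : forall a s, is_derive (fun s => w s ^ 2 * exp (a * G s)) s
            ((2 * w s * w' s + a * L s * w s ^ 2) * exp (a * G s))).
  { intros a s.
    assert (Hsq : is_derive (fun s => w s ^ 2) s (2 * w s * w' s)).
    { apply (is_derive_ext (fun s => w s * w s)); [intros u; simpl; rewrite Rmult_1_r; reflexivity |].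
      replace (2 * w s * w' s) with (w' s * w s + w s * w' s) by ring.
      apply Derive.is_derive_mult; auto. }
    assert (Hexp : is_derive (fun s => exp (a * G s)) s (exp (a * G s) * (a * L s))).
    { apply (is_C1_exp (fun s => a * G s) (fun s => a * L s)), is_C1_scal, HG. }
    replace ((2 * w s * w' s + a * L s * w s ^ 2) * exp (a * G s)) with
      (2 * w s * w' s * exp (a * G s) + w s ^ 2 * (exp (a * G s) * (a * L s))) by ring.
    apply (Derive.is_derive_mult (fun s => w s ^ 2) (fun s => exp (a * G s))); auto. }
  assert (Hcross : forall s, Rabs (2 * w s * w' s) <= 2 * L s * w s ^ 2).
  { intros s. rewrite !Rabs_mult, (Rabs_right 2) by lra.
    rewrite <- (pow2_abs (w s)).
    specialize (Hw' s). assert (0 <= Rabs (w s)) by apply Rabs_pos. nra. }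
  (* For t >= 0 the weight a = -2 makes w^2 e^{aG} nonincreasing, for t < 0
     the weight a = 2 makes it nondecreasing; it vanishes at 0 and is >= 0. *)
  assert (Hmvt : forall a,
      (forall s, (2 * w s * w' s + a * L s * w s ^ 2) * exp (a * G s) * t <= 0) ->
      w t ^ 2 * exp (a * G t) <= 0).
  { intros a. apply (MVT_nonpos (fun s => w s ^ 2 * exp (a * G s))); [apply Hweight |].
    rewrite Hw0; simpl; ring. }
  assert (Hneg : exists a, w t ^ 2 * exp (a * G t) <= 0).
  { destruct (Rle_or_lt 0 t) as [Ht | Ht]; [exists (-2) | exists 2]; apply Hmvt;
      intros s; specialize (Hcross s); apply Rabs_le_between in Hcross.
    - assert (Hd : (2 * w s * w' s + -2 * L s * w s ^ 2) * exp (-2 * G s) <= 0)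
        by (apply Rmult_le_0_r; [lra | apply Rlt_le, exp_pos]).
      nra.
    - assert (Hd : 0 <= (2 * w s * w' s + 2 * L s * w s ^ 2) * exp (2 * G s))
        by (apply Rmult_le_pos; [lra | apply Rlt_le, exp_pos]).
      nra. }
  destruct Hneg as [a Ha].
  assert (Hexp := exp_pos (a * G t)).
  apply Rsqr_0_uniq. unfold Rsqr. nra.
Qed.

Lemma sin_cos_lipschitz a b : Rabs (sin a * cos a - sin b * cos b) <= Rabs (a - b).
Proof.
  rewrite <- (Rmult_1_l (Rabs (a - b))).
  apply (bounded_variation (fun x => sin x * cos x)
           (fun x => cos x * cos x + sin x * - sin x)).
  intros x _; split.
  - apply Derive.is_derive_mult; [apply is_derive_sin | apply is_derive_cos].
  - assert (H := sin2_cos2 x). unfold Rsqr in H.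
    apply Rabs_le. nra.
Qed.

Section IntegralEquation.

Variables F B : R -> R.
Hypothesis HB : forall t, is_RInt F 0 t (B t).

Lemma RInt_solution_continuous x : continuous B x.
Proof.
  apply (continuous_ext (fun y => (B y - B x) + B x)); [intros; simpl; ring |].
  apply (continuous_plus (V:=R_NormedModule)); [| apply continuous_const].
  apply (continuous_RInt_0 (V:=R_NormedModule) F).
  apply filter_forall; intros y.
  replace (B y - B x) with (plus (opp (B x)) (B y)) by (unfold plus, opp; simpl; ring).
  apply (is_RInt_Chasles F x 0 y); [apply (is_RInt_swap (V:=R_NormedModule)) |]; apply HB.
Qed.

Lemma RInt_solution_is_derive x : continuous F x -> is_derive B x (F x).
Proof. apply (is_derive_RInt (V:=R_NormedModule) F B 0). apply filter_forall, HB. Qed.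

Lemma RInt_solution_0 : B 0 = 0.
Proof.
  rewrite <- (is_RInt_unique (V:=R_CompleteNormedModule) F 0 0 (B 0) (HB 0)).
  apply (RInt_point (V:=R_CompleteNormedModule)).
Qed.

End IntegralEquation.

Definition phase_rhs (Q g : R -> R) (k : R) (B : R -> R) (s : R) : R :=
  Q s + k * (g s * sin (B s) * cos (B s)).

Definition is_phase_solution (Q g : R -> R) (k : R) (B : R -> R) : Prop :=
  forall t, is_RInt (phase_rhs Q g k B) 0 t (B t).

Section PhaseEquation.

Variables (Q Q' g g' : R -> R) (k : R).
Hypotheses (HQ : is_C1 Q Q') (Hg : is_C1 g g').

Lemma phase_solution_is_C1 B : is_phase_solution Q g k B -> is_C1 B (phase_rhs Q g k B).
Proof.
  intros HB.
  assert (Hrhs : forall x, continuous (phase_rhs Q g k B) x).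
  { intros x. assert (HBx := RInt_solution_continuous _ _ HB x).
    apply (continuous_plus (V:=R_NormedModule)); [eapply is_C1_continuous; eauto |].
    apply (continuous_mult (K:=R_AbsRing)); [apply continuous_const |].
    repeat apply (continuous_mult (K:=R_AbsRing)).
    - eapply is_C1_continuous; eauto.
    - apply continuous_sin_comp; auto.
    - apply continuous_cos_comp; auto. }
  intros x; split; auto.
  apply (RInt_solution_is_derive _ _ HB); auto.
Qed.

Lemma phase_solution_ex_C2 B : is_phase_solution Q g k B -> ex_C2 B.
Proof.
  intros HB. assert (HB1 := phase_solution_is_C1 B HB).
  exists (phase_rhs Q g k B); eexists; split; auto.
  apply is_C1_plus; [exact HQ |].
  apply is_C1_scal, is_C1_mult; [apply is_C1_mult; [exact Hg |] |].
  - apply is_C1_sin; eauto.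
  - apply is_C1_cos; eauto.
Qed.

Lemma phase_solution_unique B1 B2 :
  is_phase_solution Q g k B1 -> is_phase_solution Q g k B2 -> forall t, B1 t = B2 t.
Proof.
  intros HB1 HB2 t.
  cut (B1 t - B2 t = 0); [lra |].
  apply (Gronwall_zero (fun t => B1 t - B2 t)
           (fun t => phase_rhs Q g k B1 t - phase_rhs Q g k B2 t)
           (fun t => Rabs k * Rabs (g t))).
  - intros s. apply (is_derive_minus (K:=R_AbsRing) (V:=R_NormedModule));
      [apply (phase_solution_is_C1 B1) | apply (phase_solution_is_C1 B2)]; auto.
  - intros s. apply (continuous_mult (K:=R_AbsRing)); [apply continuous_const |].
    apply continuous_Rabs_comp; eapply is_C1_continuous; eauto.
  - intros s. unfold phase_rhs.
    replace (Q s + k * (g s * sin (B1 s) * cos (B1 s)) - (Q s + k * (g s * sin (B2 s) * cos (B2 s))))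
      with (k * g s * (sin (B1 s) * cos (B1 s) - sin (B2 s) * cos (B2 s))) by ring.
    rewrite !Rabs_mult.
    apply Rmult_le_compat_l; [apply Rmult_le_pos; apply Rabs_pos | apply sin_cos_lipschitz].
  - rewrite (RInt_solution_0 _ _ HB1), (RInt_solution_0 _ _ HB2). ring.
Qed.

Lemma phase_solution_weight_ex_C2 B (u u' : R -> R) : is_phase_solution Q g k B ->
  (forall x, is_derive u x (u' x)) -> (forall x, continuous u' x) ->
  ex_C2 (fun t => exp (- RInt (fun s => g s * u (B s) ^ 2) 0 t)).
Proof.
  intros HB Hu Hu'.
  apply ex_C2_exp, ex_C2_opp.
  eapply ex_C2_RInt, is_C1_mult; [exact Hg |].
  apply is_C1_sqr, (is_C1_comp u u'); auto.
  apply (phase_solution_is_C1 B HB).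
Qed.

End PhaseEquation.

Lemma sumR_nonneg n f : (forall j, (j < n)%nat -> 0 <= f j) -> 0 <= sumR n f.
Proof.
  induction n as [| n IHn]; intros Hf; simpl; [lra |].
  assert (0 <= sumR n f) by (apply IHn; auto).
  assert (0 <= f n) by (apply Hf; lia).
  lra.
Qed.

Section EnergySymbol.

Variables (c m q : R) (n : nat) (E : nat -> R -> R) (xi : nat -> R).
Hypotheses (hc : 0 < c) (hm : 0 < m) (hE : forall j, (j < n)%nat -> isC1 (E j)).

Lemma Qfun_radicand_pos t :
  0 < c ^ 2 * sumR n (fun j => (xi j + bfun q E j t) ^ 2) + (m * c ^ 2) ^ 2.
Proof.
  apply Rplus_le_lt_0_compat.
  - apply Rmult_le_pos; [apply pow2_ge_0 |].
    apply sumR_nonneg; intros; apply pow2_ge_0.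
  - apply pow_lt, Rmult_lt_0_compat; [| apply pow_lt]; auto.
Qed.

Lemma Qfun_pos t : 0 < Qfun c m q n E xi t.
Proof. apply sqrt_lt_R0, Qfun_radicand_pos. Qed.

Lemma bfun_ex_C2 j : (j < n)%nat -> ex_C2 (bfun q E j).
Proof.
  intros hj. eapply ex_C2_RInt, is_C1_scal, isC1_is_C1_Derive, hE, hj.
Qed.

Lemma Qfun_ex_C2 : ex_C2 (Qfun c m q n E xi).
Proof.
  apply ex_C2_sqrt; [apply Qfun_radicand_pos |].
  apply ex_C2_plus; [| apply ex_C2_const].
  apply (ex_C2_mult (fun _ => c ^ 2)); [apply ex_C2_const |].
  apply (ex_C2_sum n (fun j t => (xi j + bfun q E j t) ^ 2)).
  intros j hj. apply ex_C2_sqr, (ex_C2_plus (fun _ => xi j)); [apply ex_C2_const |].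
  apply bfun_ex_C2, hj.
Qed.

Lemma Qfun_log_derive_is_C1 :
  exists g', is_C1 (fun s => / Qfun c m q n E xi s * Qder c m q n E xi s) g'.
Proof.
  destruct (ex_C2_is_C1_Derive _ Qfun_ex_C2) as [HQ HQ'].
  eexists. apply is_C1_mult; [| exact HQ'].
  apply is_C1_inv; [intros t; apply Rgt_not_eq, Qfun_pos | exact HQ].
Qed.

Lemma solB_phase_solution B : solB c m q n E xi B ->
  is_phase_solution (Qfun c m q n E xi)
    (fun s => / Qfun c m q n E xi s * Qder c m q n E xi s) (-1) B.
Proof.
  intros HB t. eapply (is_RInt_ext (V:=R_NormedModule)); [| apply HB].
  intros; unfold phase_rhs; simpl; ring.
Qed.

Lemma solD_phase_solution D : solD c m q n E xi D ->
  is_phase_solution (Qfun c m q n E xi)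
    (fun s => / Qfun c m q n E xi s * Qder c m q n E xi s) 1 D.
Proof.
  intros HD t. eapply (is_RInt_ext (V:=R_NormedModule)); [| apply HD].
  intros; unfold phase_rhs; simpl; ring.
Qed.

End EnergySymbol.

Theorem lemma3p1 (c m q : R) (n : nat) (Ef : nat -> R -> R) (E00 E01 : R)
  (hc : 0 < c) (hm : 0 < m) (hq : q <> 0)
  (hE : forall j, (j < n)%nat -> isC1 (Ef j))
  (hE0 : exists S, (forall t, sumR n (fun j => Rabs (Ef j t)) <= S) /\ S < E00)
  (hE1 : exists S, (forall t, sumR n (fun j => Rabs (Derive (Ef j) t)) <= S) /\ S < E01)
  (xi : nat -> R) :
  (forall B, solB c m q n Ef xi B -> isC2 B /\ isC2 (Afun c m q n Ef xi B)) /\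
  (forall D, solD c m q n Ef xi D -> isC2 D /\ isC2 (Cfun c m q n Ef xi D)) /\
  (forall B1 B2, solB c m q n Ef xi B1 -> solB c m q n Ef xi B2 ->
     forall t, B1 t = B2 t) /\
  (forall D1 D2, solD c m q n Ef xi D1 -> solD c m q n Ef xi D2 ->
     forall t, D1 t = D2 t).
Proof.
  destruct (ex_C2_is_C1_Derive _ (Qfun_ex_C2 c m q n Ef xi hc hm hE)) as [HQ _].
  destruct (Qfun_log_derive_is_C1 c m q n Ef xi hc hm hE) as [g' Hg].
  split; [| split; [| split]].
  - intros B HB. apply solB_phase_solution in HB.
    split; apply ex_C2_isC2.
    + exact (phase_solution_ex_C2 _ _ _ _ _ HQ Hg B HB).
    + apply (phase_solution_weight_ex_C2 _ _ _ _ _ HQ Hg B sin cos HB);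
        auto using is_derive_sin, continuous_cos.
  - intros D HD. apply solD_phase_solution in HD.
    split; apply ex_C2_isC2.
    + exact (phase_solution_ex_C2 _ _ _ _ _ HQ Hg D HD).
    + apply (ex_C2_mult (fun _ => _)); [apply ex_C2_const |].
      apply (phase_solution_weight_ex_C2 _ _ _ _ _ HQ Hg D cos (fun x => - sin x) HD);
        auto using is_derive_cos.
      intros x. apply (continuous_opp (V:=R_NormedModule)), continuous_sin.
  - intros B1 B2 HB1 HB2.
    apply (phase_solution_unique _ _ _ _ (-1) HQ Hg); auto using solB_phase_solution.
  - intros D1 D2 HD1 HD2.
    apply (phase_solution_unique _ _ _ _ 1 HQ Hg); auto using solD_phase_solution.
Qed.
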